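(* Let $\kappa>0$. On $\mathbb{C}^4$ with coordinates $(Z_1,Z_2,W_1,W_2)$ let $\mu_R=|Z_1|^2+|Z_2|^2-|W_1|^2-|W_2|^2-2\sqrt\kappa$ and $\mu_C=Z_1W_1+Z_2W_2$. For $(z_1,z_2)\in\mathbb{C}^2\setminus\{0\}$ and $\psi\in\mathbb{R}$ put $s=|z_1|^2+|z_2|^2$, $F=\sqrt{1+\kappa/s^2}$, $f=\sqrt{1+\kappa/s^2}+\sqrt\kappa/s$, and define the map $$Z_1=z_1e^{i\psi}f^{1/2},\quad Z_2=z_2e^{i\psi}f^{1/2},\quad W_1=-z_2e^{-i\psi}f^{-1/2},\quad W_2=z_1e^{-i\psi}f^{-1/2}.$$ Then its image lies in $\mu_R^{-1}(0)\cap\mu_C^{-1}(0)$, and the pullback of $\frac12\big(|dZ_1|^2+|dZ_2|^2+|dW_1|^2+|dW_2|^2\big)$ equals $$g+sF\big(d\psi+i(A-\bar A)\big)^2,$$ where $g=\frac1s\big(F|z_1dz_2-z_2dz_1|^2+F^{-1}|\bar z_1dz_1+\bar z_2dz_2|^2\big)$ is the Eguchi–Hanson metric and $A=\frac{\sqrt\kappa}{2s^2F}(z_1d\bar z_1+z_2d\bar z_2)$.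
   Context: For a complex $1$-form $\alpha$, $|\alpha|^2$ denotes the symmetric product $\alpha\bar\alpha$; $(\cdot)^2$ of a real $1$-form is its symmetric square. Note $A-\bar A$ is purely imaginary so $i(A-\bar A)$ is a real $1$-form. *)

From Stdlib Require Import Reals.
From Coquelicot Require Import Coquelicot.
Open Scope R_scope.

Definition ssq (z1 z2 : C) : R := Cmod z1 ^ 2 + Cmod z2 ^ 2.
Definition FF (kappa s : R) : R := sqrt (1 + kappa / s ^ 2).
Definition ff (kappa s : R) : R := sqrt (1 + kappa / s ^ 2) + sqrt kappa / s.
Definition cexpi (psi : R) : C := (cos psi, sin psi).

Definition mapZ1 (kappa : R) (z1 z2 : C) (psi : R) : C :=
  (z1 * cexpi psi * RtoC (sqrt (ff kappa (ssq z1 z2))))%C.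
Definition mapZ2 (kappa : R) (z1 z2 : C) (psi : R) : C :=
  (z2 * cexpi psi * RtoC (sqrt (ff kappa (ssq z1 z2))))%C.
Definition mapW1 (kappa : R) (z1 z2 : C) (psi : R) : C :=
  (- z2 * cexpi (- psi) * RtoC (/ sqrt (ff kappa (ssq z1 z2))))%C.
Definition mapW2 (kappa : R) (z1 z2 : C) (psi : R) : C :=
  (z1 * cexpi (- psi) * RtoC (/ sqrt (ff kappa (ssq z1 z2))))%C.

Definition muR (kappa : R) (Z1 Z2 W1 W2 : C) : R :=
  Cmod Z1 ^ 2 + Cmod Z2 ^ 2 - Cmod W1 ^ 2 - Cmod W2 ^ 2 - 2 * sqrt kappa.
Definition muC (Z1 Z2 W1 W2 : C) : C := (Z1 * W1 + Z2 * W2)%C.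

(* Differential of a C-valued function h of (z1,z2,psi) at (z1,z2,psi),
   evaluated on the tangent vector (w1,w2,chi) (w1 = dz1(v), w2 = dz2(v),
   chi = dpsi(v)): derivative at t = 0 of t |-> h(z1 + t w1, z2 + t w2, psi + t chi),
   componentwise (real and imaginary parts). *)
Definition dmap (h : C -> C -> R -> C) (z1 z2 : C) (psi : R)
    (w1 w2 : C) (chi : R) : C :=
  (Derive (fun t => Re (h (z1 + RtoC t * w1)%C (z2 + RtoC t * w2)%C (psi + t * chi))) 0,
   Derive (fun t => Im (h (z1 + RtoC t * w1)%C (z2 + RtoC t * w2)%C (psi + t * chi))) 0).

Definition EHg (kappa : R) (z1 z2 : C) (w1 w2 : C) : R :=
  let s := ssq z1 z2 in let F := FF kappa s in
  / s * (F * Cmod (z1 * w2 - z2 * w1)%C ^ 2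
         + / F * Cmod (Cconj z1 * w1 + Cconj z2 * w2)%C ^ 2).

Definition formA (kappa : R) (z1 z2 : C) (w1 w2 : C) : C :=
  let s := ssq z1 z2 in let F := FF kappa s in
  (RtoC (sqrt kappa / (2 * s ^ 2 * FF kappa s)) * (z1 * Cconj w1 + z2 * Cconj w2))%C.

From Stdlib Require Import Reals Lra.
From Coquelicot Require Import Coquelicot.
Open Scope R_scope.

(* Along a tangent vector (w, chi) the lift multiplies z by e^{i psi} f^{1/2} (for Z)
   and (-z2, z1) by e^{-i psi} f^{-1/2} (for W), so its differential is the rotated and
   dilated vector w + mu z, resp. w - mu z, with mu = i chi + d log f^{1/2}.  As f + 1/f = 2F
   and f - 1/f = 2 sqrt(kappa)/s, half the sum of squares is
     F (|w|^2 + s |mu|^2) + (2 sqrt(kappa)/s) Re (mu conj <z,w>),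
   where <z,w> = conj z1 w1 + conj z2 w2; the same relation gives
   |Z|^2 - |W|^2 = (f - 1/f) s = 2 sqrt(kappa).  Then d log f = - sqrt(kappa) ds/(s^2 F),
   the Lagrange identity |z1 w2 - z2 w1|^2 + |<z,w>|^2 = s |w|^2 and
   F^2 = 1 + kappa/s^2 turn the sum into g + s F (dpsi + i(A - conj A))^2. *)

Lemma one_add_div_sqr_gt0 (kappa s : R) : 0 <= kappa -> 0 < s -> 0 < 1 + kappa / s ^ 2.
Proof.
  intros hk hs.
  assert (0 <= kappa / s ^ 2) by (apply Rdiv_le_0_compat; [lra | apply pow_lt, hs]).
  lra.
Qed.

Lemma FF_sqr (kappa s : R) : 0 <= kappa -> 0 < s -> FF kappa s ^ 2 = 1 + kappa / s ^ 2.
Proof. intros hk hs. apply pow2_sqrt, Rlt_le, one_add_div_sqr_gt0; assumption. Qed.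

Lemma FF_gt0 (kappa s : R) : 0 <= kappa -> 0 < s -> 0 < FF kappa s.
Proof. intros hk hs. apply sqrt_lt_R0, one_add_div_sqr_gt0; assumption. Qed.

Lemma ff_gt0 (kappa s : R) : 0 <= kappa -> 0 < s -> 0 < ff kappa s.
Proof.
  intros hk hs. change (0 < FF kappa s + sqrt kappa / s).
  pose proof (FF_gt0 kappa s hk hs).
  assert (0 <= sqrt kappa / s) by (apply Rdiv_le_0_compat; [apply sqrt_pos | exact hs]).
  lra.
Qed.

Lemma inv_ff (kappa s : R) : 0 <= kappa -> 0 < s -> / ff kappa s = FF kappa s - sqrt kappa / s.
Proof.
  intros hk hs. symmetry. apply Rmult_inv_r_uniq; [apply Rgt_not_eq, ff_gt0; assumption |].
  change (ff kappa s) with (FF kappa s + sqrt kappa / s).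
  pose proof (FF_sqr kappa s hk hs) as hF. pose proof (pow2_sqrt kappa hk) as hK.
  replace ((FF kappa s + sqrt kappa / s) * (FF kappa s - sqrt kappa / s))
    with (FF kappa s ^ 2 - sqrt kappa ^ 2 / s ^ 2) by (field; lra).
  rewrite hF, hK. field. lra.
Qed.

Lemma sqr_sqrt_ff (kappa s : R) : 0 <= kappa -> 0 < s ->
  sqrt (ff kappa s) ^ 2 = FF kappa s + sqrt kappa / s.
Proof. intros hk hs. apply pow2_sqrt, Rlt_le, ff_gt0; assumption. Qed.

Lemma sqr_inv_sqrt_ff (kappa s : R) : 0 <= kappa -> 0 < s ->
  (/ sqrt (ff kappa s)) ^ 2 = FF kappa s - sqrt kappa / s.
Proof. intros hk hs. rewrite pow_inv, sqr_sqrt_ff by assumption. apply inv_ff; assumption. Qed.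

Lemma is_derive_ff (kappa s : R) : 0 <= kappa -> 0 < s ->
  is_derive (ff kappa) s (- sqrt kappa / (s ^ 2 * FF kappa s) * ff kappa s).
Proof.
  intros hk hs. pose proof (FF_gt0 kappa s hk hs) as hF0.
  unfold ff. auto_derive.
  - repeat split; [nra | apply one_add_div_sqr_gt0; assumption | lra].
  - change (sqrt (1 + kappa * / (s * (s * 1)))) with (FF kappa s).
    change (sqrt (1 + kappa / s ^ 2)) with (FF kappa s).
    pose proof (pow2_sqrt kappa hk) as hK.
    set (F := FF kappa s) in *. set (K := sqrt kappa) in *.
    rewrite <- hK. field. lra.
Qed.

Definition is_derive_C (h : R -> C) (x : R) (d : C) : Prop :=
  is_derive (fun t => Re (h t)) x (Re d) /\ is_derive (fun t => Im (h t)) x (Im d).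

Lemma is_derive_C_line (z w : C) (x : R) : is_derive_C (fun t => (z + RtoC t * w)%C) x w.
Proof. split; simpl; auto_derive; auto; unfold Re, Im; ring. Qed.

Lemma is_derive_C_opp (h : R -> C) (x : R) (d : C) :
  is_derive_C h x d -> is_derive_C (fun t => (- h t)%C) x (- d)%C.
Proof.
  intros [hre him]; split;
    [apply (is_derive_opp (fun t => Re (h t))) | apply (is_derive_opp (fun t => Im (h t)))];
    assumption.
Qed.

Lemma is_derive_C_RtoC (g : R -> R) (x d : R) :
  is_derive g x d -> is_derive_C (fun t => RtoC (g t)) x (RtoC d).
Proof. intros hg; split; simpl; [exact hg | auto_derive; auto]. Qed.

Lemma is_derive_C_cexpi (theta : R -> R) (x d : R) :
  is_derive theta x d -> is_derive_C (fun t => cexpi (theta t)) x (Ci * RtoC d * cexpi (theta x))%C.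
Proof.
  intros hth; split.
  - replace (Re (Ci * _ * _)) with (d * - sin (theta x)) by (simpl; ring).
    apply (is_derive_comp cos theta); [apply is_derive_cos | exact hth].
  - replace (Im (Ci * _ * _)) with (d * cos (theta x)) by (simpl; ring).
    apply (is_derive_comp sin theta); [apply is_derive_sin | exact hth].
Qed.

Lemma is_derive_C_mult (h1 h2 : R -> C) (x : R) (d1 d2 : C) :
  is_derive_C h1 x d1 -> is_derive_C h2 x d2 ->
  is_derive_C (fun t => (h1 t * h2 t)%C) x (d1 * h2 x + h1 x * d2)%C.
Proof.
  intros [hre1 him1] [hre2 him2]; split.
  - replace (Re (d1 * h2 x + h1 x * d2))
      with (Re d1 * Re (h2 x) + Re (h1 x) * Re d2 - (Im d1 * Im (h2 x) + Im (h1 x) * Im d2))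
      by (unfold Re, Im; simpl; ring).
    apply (is_derive_minus (fun t => Re (h1 t) * Re (h2 t)) (fun t => Im (h1 t) * Im (h2 t)));
      apply (is_derive_mult (K := R_AbsRing)); auto using Rmult_comm.
  - replace (Im (d1 * h2 x + h1 x * d2))
      with (Re d1 * Im (h2 x) + Re (h1 x) * Im d2 + (Im d1 * Re (h2 x) + Im (h1 x) * Re d2))
      by (unfold Re, Im; simpl; ring).
    apply (is_derive_plus (fun t => Re (h1 t) * Im (h2 t)) (fun t => Im (h1 t) * Re (h2 t)));
      apply (is_derive_mult (K := R_AbsRing)); auto using Rmult_comm.
Qed.

Lemma is_derive_C_rotate_dilate (L : R -> C) (theta rho : R -> R) (x : R) (l : C) (a r : R)
    (dL : C) (dtheta lam : R) :
  L x = l -> theta x = a -> rho x = r ->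
  is_derive_C L x dL -> is_derive theta x dtheta -> is_derive rho x (lam * r) ->
  is_derive_C (fun t => (L t * cexpi (theta t) * RtoC (rho t))%C) x
    ((dL + (Ci * RtoC dtheta + RtoC lam) * l) * cexpi a * RtoC r)%C.
Proof.
  intros <- <- <- hL htheta hrho.
  replace ((dL + (Ci * RtoC dtheta + RtoC lam) * L x) * cexpi (theta x) * RtoC (rho x))%C
    with ((dL * cexpi (theta x) + L x * (Ci * RtoC dtheta * cexpi (theta x))) * RtoC (rho x)
          + L x * cexpi (theta x) * RtoC (lam * rho x))%C by (rewrite RtoC_mult; ring).
  apply (is_derive_C_mult (fun t => L t * cexpi (theta t))%C (fun t => RtoC (rho t))).
  - apply (is_derive_C_mult L (fun t => cexpi (theta t))); [exact hL |].
    apply is_derive_C_cexpi, htheta.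
  - apply is_derive_C_RtoC, hrho.
Qed.

Lemma dmap_of_is_derive_C (h : C -> C -> R -> C) (z1 z2 : C) (psi : R) (w1 w2 : C) (chi : R)
    (d : C) :
  is_derive_C (fun t => h (z1 + RtoC t * w1)%C (z2 + RtoC t * w2)%C (psi + t * chi)) 0 d ->
  dmap h z1 z2 psi w1 w2 chi = d.
Proof.
  intros [hre him]. destruct d as [d1 d2].
  unfold dmap; f_equal; apply is_derive_unique; assumption.
Qed.

Lemma Cmod_cexpi (a : R) : Cmod (cexpi a) = 1.
Proof.
  unfold Cmod, cexpi; simpl. rewrite !Rmult_1_r, <- sqrt_1. f_equal.
  rewrite Rplus_comm. apply sin2_cos2.
Qed.

Lemma Cmod_sqr_rotate_dilate (u : C) (a r : R) :
  Cmod (u * cexpi a * RtoC r)%C ^ 2 = r ^ 2 * Cmod u ^ 2.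
Proof. rewrite !Cmod_mult, Cmod_cexpi, Cmod_R, Rmult_1_r, Rpow_mult_distr, pow2_abs. ring. Qed.

Definition hdot (z1 z2 w1 w2 : C) : C := (Cconj z1 * w1 + Cconj z2 * w2)%C.

Lemma line_at_0 (z w : C) : (z + RtoC 0 * w)%C = z.
Proof. rewrite Cmult_0_l. apply Cplus_0_r. Qed.

Lemma ssq_gt0 (z1 z2 : C) : z1 <> 0%C \/ z2 <> 0%C -> 0 < ssq z1 z2.
Proof.
  unfold ssq. pose proof (pow2_ge_0 (Cmod z1)). pose proof (pow2_ge_0 (Cmod z2)).
  intros [hz | hz]; apply Cmod_gt_0, (pow_lt _ 2) in hz; lra.
Qed.

Lemma is_derive_ssq_line (z1 z2 w1 w2 : C) :
  is_derive (fun t => ssq (z1 + RtoC t * w1) (z2 + RtoC t * w2)) 0 (2 * Re (hdot z1 z2 w1 w2)).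
Proof.
  unfold ssq, hdot. eapply is_derive_ext.
  { intro t. rewrite (Cmod2_alt (z1 + RtoC t * w1)), (Cmod2_alt (z2 + RtoC t * w2)). reflexivity. }
  simpl. auto_derive; auto. ring.
Qed.

Lemma is_derive_sqrt_logderiv (g : R -> R) (x lam : R) :
  0 < g x -> is_derive g x (2 * lam * g x) -> is_derive (fun t => sqrt (g t)) x (lam * sqrt (g x)).
Proof.
  intros hg hderiv.
  replace (lam * sqrt (g x)) with (2 * lam * g x / (2 * sqrt (g x))).
  - apply is_derive_sqrt; assumption.
  - pose proof (sqrt_lt_R0 _ hg). rewrite <- (sqrt_sqrt (g x)) at 1 by lra. field. lra.
Qed.

Lemma is_derive_inv_logderiv (g : R -> R) (x lam : R) :
  g x <> 0 -> is_derive g x (lam * g x) -> is_derive (fun t => / g t) x (- lam * / g x).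
Proof.
  intros hg hderiv.
  replace (- lam * / g x) with (- (lam * g x) / g x ^ 2) by (field; exact hg).
  apply is_derive_inv; assumption.
Qed.

Definition scale_logderiv (kappa : R) (z1 z2 w1 w2 : C) : R :=
  - sqrt kappa * Re (hdot z1 z2 w1 w2) / (ssq z1 z2 ^ 2 * FF kappa (ssq z1 z2)).

Lemma is_derive_sqrt_ff_line (kappa : R) (z1 z2 w1 w2 : C) : 0 <= kappa -> 0 < ssq z1 z2 ->
  is_derive (fun t => sqrt (ff kappa (ssq (z1 + RtoC t * w1) (z2 + RtoC t * w2)))) 0
    (scale_logderiv kappa z1 z2 w1 w2 * sqrt (ff kappa (ssq z1 z2))).
Proof.
  intros hk hs.
  set (S := fun t => ssq (z1 + RtoC t * w1) (z2 + RtoC t * w2)).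
  assert (hS0 : S 0 = ssq z1 z2) by (unfold S; rewrite !line_at_0; reflexivity).
  pose proof (FF_gt0 kappa _ hk hs).
  rewrite <- hS0.
  apply (is_derive_sqrt_logderiv (fun t => ff kappa (S t))); rewrite hS0;
    [apply ff_gt0; assumption |].
  replace (2 * scale_logderiv kappa z1 z2 w1 w2 * ff kappa (ssq z1 z2))
    with (2 * Re (hdot z1 z2 w1 w2)
          * (- sqrt kappa / (ssq z1 z2 ^ 2 * FF kappa (ssq z1 z2)) * ff kappa (ssq z1 z2)))
    by (unfold scale_logderiv; field; split; lra).
  apply (is_derive_comp (ff kappa) S);
    [rewrite hS0; apply is_derive_ff; assumption | apply is_derive_ssq_line].
Qed.

Section LiftDifferential.

Variables (kappa : R) (z1 z2 w1 w2 : C) (psi chi : R).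
Hypotheses (hk : 0 <= kappa) (hs : 0 < ssq z1 z2).

Let r := sqrt (ff kappa (ssq z1 z2)).
Let lam := scale_logderiv kappa z1 z2 w1 w2.
Let mu := (Ci * RtoC chi + RtoC lam)%C.
Let rho t := sqrt (ff kappa (ssq (z1 + RtoC t * w1) (z2 + RtoC t * w2))).

Let rho_at_0 : rho 0 = r.
Proof. unfold rho. rewrite !line_at_0. reflexivity. Qed.

Let is_derive_rho : is_derive rho 0 (lam * r).
Proof. exact (is_derive_sqrt_ff_line kappa z1 z2 w1 w2 hk hs). Qed.

Let is_derive_inv_rho : is_derive (fun t => / rho t) 0 (- lam * / r).
Proof.
  rewrite <- rho_at_0. apply is_derive_inv_logderiv; rewrite rho_at_0; [| exact is_derive_rho].
  apply Rgt_not_eq, sqrt_lt_R0, ff_gt0; assumption.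
Qed.

Lemma dmap_mapZ1 : dmap (mapZ1 kappa) z1 z2 psi w1 w2 chi = ((w1 + mu * z1) * cexpi psi * RtoC r)%C.
Proof.
  apply dmap_of_is_derive_C.
  apply (is_derive_C_rotate_dilate (fun t => z1 + RtoC t * w1)%C (fun t => psi + t * chi) rho);
    [apply line_at_0 | ring | exact rho_at_0 | apply is_derive_C_line | | exact is_derive_rho].
  auto_derive; auto; ring.
Qed.

Lemma dmap_mapZ2 : dmap (mapZ2 kappa) z1 z2 psi w1 w2 chi = ((w2 + mu * z2) * cexpi psi * RtoC r)%C.
Proof.
  apply dmap_of_is_derive_C.
  apply (is_derive_C_rotate_dilate (fun t => z2 + RtoC t * w2)%C (fun t => psi + t * chi) rho);
    [apply line_at_0 | ring | exact rho_at_0 | apply is_derive_C_line | | exact is_derive_rho].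
  auto_derive; auto; ring.
Qed.

Lemma dmap_mapW1 :
  dmap (mapW1 kappa) z1 z2 psi w1 w2 chi = (- (w2 - mu * z2) * cexpi (- psi) * RtoC (/ r))%C.
Proof.
  apply dmap_of_is_derive_C.
  replace (- (w2 - mu * z2))%C with (- w2 + (Ci * RtoC (- chi) + RtoC (- lam)) * - z2)%C
    by (unfold mu; rewrite !RtoC_opp; ring).
  apply (is_derive_C_rotate_dilate (fun t => - (z2 + RtoC t * w2))%C (fun t => - (psi + t * chi))
           (fun t => / rho t));
    [rewrite line_at_0; reflexivity | ring | rewrite rho_at_0; reflexivity
    | apply is_derive_C_opp, is_derive_C_line | | exact is_derive_inv_rho].
  auto_derive; auto; ring.
Qed.

Lemma dmap_mapW2 :
  dmap (mapW2 kappa) z1 z2 psi w1 w2 chi = ((w1 - mu * z1) * cexpi (- psi) * RtoC (/ r))%C.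
Proof.
  apply dmap_of_is_derive_C.
  replace (w1 - mu * z1)%C with (w1 + (Ci * RtoC (- chi) + RtoC (- lam)) * z1)%C
    by (unfold mu; rewrite !RtoC_opp; ring).
  apply (is_derive_C_rotate_dilate (fun t => z1 + RtoC t * w1)%C (fun t => - (psi + t * chi))
           (fun t => / rho t));
    [apply line_at_0 | ring | rewrite rho_at_0; reflexivity
    | apply is_derive_C_line | | exact is_derive_inv_rho].
  auto_derive; auto; ring.
Qed.

End LiftDifferential.

Lemma sum_Cmod_sqr_add_mul (z1 z2 w1 w2 mu : C) :
  Cmod (w1 + mu * z1)%C ^ 2 + Cmod (w2 + mu * z2)%C ^ 2
  = Cmod w1 ^ 2 + Cmod w2 ^ 2 + Cmod mu ^ 2 * ssq z1 z2 + 2 * Re (mu * Cconj (hdot z1 z2 w1 w2)).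
Proof. unfold ssq, hdot. rewrite !Cmod2_alt. unfold Re, Im. simpl. ring. Qed.

Lemma sum_Cmod_sqr_sub_mul (z1 z2 w1 w2 mu : C) :
  Cmod (w1 - mu * z1)%C ^ 2 + Cmod (w2 - mu * z2)%C ^ 2
  = Cmod w1 ^ 2 + Cmod w2 ^ 2 + Cmod mu ^ 2 * ssq z1 z2 - 2 * Re (mu * Cconj (hdot z1 z2 w1 w2)).
Proof. unfold ssq, hdot. rewrite !Cmod2_alt. unfold Re, Im. simpl. ring. Qed.

Lemma Lagrange_identity (z1 z2 w1 w2 : C) :
  Cmod (z1 * w2 - z2 * w1)%C ^ 2 + Cmod (hdot z1 z2 w1 w2) ^ 2
  = ssq z1 z2 * (Cmod w1 ^ 2 + Cmod w2 ^ 2).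
Proof. unfold ssq, hdot. rewrite !Cmod2_alt. unfold Re, Im. simpl. ring. Qed.

Lemma Re_Ci_formA (kappa : R) (z1 z2 w1 w2 : C) :
  Re (Ci * (formA kappa z1 z2 w1 w2 - Cconj (formA kappa z1 z2 w1 w2)))%C
  = sqrt kappa * Im (hdot z1 z2 w1 w2) / (ssq z1 z2 ^ 2 * FF kappa (ssq z1 z2)).
Proof.
  unfold formA, hdot, Rdiv. rewrite !Rinv_mult. simpl.
  generalize (/ (ssq z1 z2 * (ssq z1 z2 * 1))) (/ FF kappa (ssq z1 z2)). intros. field.
Qed.

Lemma Re_mul_Cconj (a b : C) : Re (a * Cconj b) = Re a * Re b + Im a * Im b.
Proof. unfold Re, Im. simpl. ring. Qed.

Lemma half_sum_dilated_sqr (kappa : R) (z1 z2 w1 w2 : C) (chi : R) :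
  0 <= kappa -> 0 < ssq z1 z2 ->
  let s := ssq z1 z2 in
  let F := FF kappa s in
  let mu := (Ci * RtoC chi + RtoC (scale_logderiv kappa z1 z2 w1 w2))%C in
  / 2 * ((F + sqrt kappa / s) * (Cmod (w1 + mu * z1)%C ^ 2 + Cmod (w2 + mu * z2)%C ^ 2)
       + (F - sqrt kappa / s) * (Cmod (w1 - mu * z1)%C ^ 2 + Cmod (w2 - mu * z2)%C ^ 2))
  = EHg kappa z1 z2 w1 w2 + s * F * (chi + sqrt kappa * Im (hdot z1 z2 w1 w2) / (s ^ 2 * F)) ^ 2.
Proof.
  intros hk hs s F mu. change (0 < s) in hs.
  assert (hF0 : 0 < F) by (apply FF_gt0; assumption).
  assert (hK : sqrt kappa ^ 2 = (F ^ 2 - 1) * s ^ 2)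
    by (unfold F; rewrite FF_sqr, pow2_sqrt by assumption; field; lra).
  pose proof (Lagrange_identity z1 z2 w1 w2) as hcross.
  rewrite sum_Cmod_sqr_add_mul, sum_Cmod_sqr_sub_mul. unfold EHg. fold s F in hcross |- *.
  change (Cconj z1 * w1 + Cconj z2 * w2)%C with (hdot z1 z2 w1 w2).
  unfold scale_logderiv in mu. fold s F in mu.
  set (h := hdot z1 z2 w1 w2) in *. set (K := sqrt kappa) in *.
  set (lam := - K * Re h / (s ^ 2 * F)) in mu.
  assert (hmu : Cmod mu ^ 2 = lam ^ 2 + chi ^ 2) by (unfold mu; rewrite Cmod2_alt; simpl; ring).
  assert (hmuh : Re (mu * Cconj h) = lam * Re h + chi * Im h)
    by (rewrite Re_mul_Cconj; unfold mu; simpl; ring).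
  replace (Cmod (z1 * w2 - z2 * w1)%C ^ 2) with (s * (Cmod w1 ^ 2 + Cmod w2 ^ 2) - Cmod h ^ 2)
    by lra.
  rewrite hmu, hmuh, (Cmod2_alt h). unfold lam.
  replace (/ F) with (F - K ^ 2 / (s ^ 2 * F)) by (rewrite hK; field; lra).
  field. lra.
Qed.

Lemma muR_lift_eq0 (kappa : R) (z1 z2 : C) (psi : R) : 0 <= kappa -> 0 < ssq z1 z2 ->
  muR kappa (mapZ1 kappa z1 z2 psi) (mapZ2 kappa z1 z2 psi)
    (mapW1 kappa z1 z2 psi) (mapW2 kappa z1 z2 psi) = 0.
Proof.
  intros hk hs. unfold muR, mapZ1, mapZ2, mapW1, mapW2.
  rewrite !Cmod_sqr_rotate_dilate, Cmod_opp, sqr_sqrt_ff, sqr_inv_sqrt_ff by assumption.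
  transitivity (2 * sqrt kappa / ssq z1 z2 * ssq z1 z2 - 2 * sqrt kappa);
    [unfold ssq, Rdiv; ring |].
  field. lra.
Qed.

Lemma muC_lift_eq0 (kappa : R) (z1 z2 : C) (psi : R) :
  muC (mapZ1 kappa z1 z2 psi) (mapZ2 kappa z1 z2 psi)
    (mapW1 kappa z1 z2 psi) (mapW2 kappa z1 z2 psi) = 0%C.
Proof. unfold muC, mapZ1, mapZ2, mapW1, mapW2. ring. Qed.

Theorem mainTheorem4 (kappa : R) (hk : 0 < kappa) (z1 z2 : C) (psi : R)
    (hz : z1 <> 0%C \/ z2 <> 0%C) :
  let Z1 := mapZ1 kappa z1 z2 psi in
  let Z2 := mapZ2 kappa z1 z2 psi in
  let W1 := mapW1 kappa z1 z2 psi in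
  let W2 := mapW2 kappa z1 z2 psi in
  muR kappa Z1 Z2 W1 W2 = 0 /\ muC Z1 Z2 W1 W2 = 0%C /\
  forall (w1 w2 : C) (chi : R),
    let s := ssq z1 z2 in
    let F := FF kappa s in
    let A := formA kappa z1 z2 w1 w2 in
    / 2 * (Cmod (dmap (mapZ1 kappa) z1 z2 psi w1 w2 chi) ^ 2
           + Cmod (dmap (mapZ2 kappa) z1 z2 psi w1 w2 chi) ^ 2
           + Cmod (dmap (mapW1 kappa) z1 z2 psi w1 w2 chi) ^ 2
           + Cmod (dmap (mapW2 kappa) z1 z2 psi w1 w2 chi) ^ 2)
    = EHg kappa z1 z2 w1 w2 + s * F * (chi + Re (Ci * (A - Cconj A))%C) ^ 2.
Proof.
  intros Z1 Z2 W1 W2.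
  assert (hk0 : 0 <= kappa) by lra.
  pose proof (ssq_gt0 z1 z2 hz) as hs.
  split; [| split].
  - apply muR_lift_eq0; assumption.
  - apply muC_lift_eq0.
  - intros w1 w2 chi. cbv zeta.
    rewrite dmap_mapZ1, dmap_mapZ2, dmap_mapW1, dmap_mapW2 by assumption.
    rewrite !Cmod_sqr_rotate_dilate, !Cmod_opp, sqr_sqrt_ff, sqr_inv_sqrt_ff by assumption.
    rewrite Re_Ci_formA, <- half_sum_dilated_sqr by assumption.
    ring.
Qed.
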